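(* Let $X$ be a real reflexive Banach space, $T:X\rightrightarrows X^{\ast}$ maximally monotone, and $h,h'\in\mathcal{H}(T)$; set $E=L^{h}$ and $E'=L^{h'}$. Then: (i) $E$ and $E'$ are mutually additive if and only if $h^{\ast}\circ i\le h'$; in particular, $E$ is additive if and only if $h^{\ast}\circ i\le h$; (ii) $h=h^{\ast}\circ i$ if and only if $L^{h}$ is maximally additive. In particular, $E$ is mutually additive with $L^{h^{\ast}\circ i}$, and $L^{h^{\ast}\circ i}$ contains (in the sense $E''(\epsilon,x)\subset L^{h^{\ast}\circ i}(\epsilon,x)$ for all $\epsilon\ge0,x\in X$) every enlargement $E''=L^{g}$, $g\in\mathcal{H}(T)$, that is mutually additive with $E$.
   Context: $X^{\ast}$ is the dual of $X$ with pairing $\langle\cdot,\cdot\rangle$. The dual of $X\times X^{\ast}$ is identified with $X^{\ast}\times X$ via $\langle (x,x^{\ast}),(y^{\ast},y)\rangle=\langle x,y^{\ast}\rangle+\langle y,x^{\ast}\rangle$; for $g:X\times X^{\ast}\to\mathbb{R}\cup\{+\infty\}$, $g^{\ast}(y^{\ast},y)=\sup_{(x,x^{\ast})}\{\langle x,y^{\ast}\rangle+\langle y,x^{\ast}\rangle-g(x,x^{\ast})\}$, and $i(x,x^{\ast})=(x^{\ast},x)$. $\mathcal{H}(T)$ is the family of lower semicontinuous convex $h:X\times X^{\ast}\to\mathbb{R}\cup\{+\infty\}$ with $h(x,x^{\ast})\ge\langle x,x^{\ast}\rangle$ everywhere and equality whenever $x^{\ast}\in T(x)$ (if $h\in\mathcal{H}(T)$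 then $h^{\ast}\circ i\in\mathcal{H}(T)$). For $g\in\mathcal{H}(T)$, $L^{g}:[0,\infty)\times X\rightrightarrows X^{\ast}$ is $L^{g}(\epsilon,x)=\{x^{\ast}:g(x,x^{\ast})\le\langle x,x^{\ast}\rangle+\epsilon\}$; every enlargement in the family $\mathbb{E}(T)$ is of the form $L^g$ for a unique $g\in\mathcal{H}(T)$. Two enlargements $E,E'$ are mutually additive if $\langle x-y,x^{\ast}-y^{\ast}\rangle\ge-(\epsilon+\eta)$ for all $\epsilon,\eta\ge0$, $x,y\in X$, $x^{\ast}\in E(\epsilon,x)$, $y^{\ast}\in E'(\eta,y)$; $E$ is additive if it is mutually additive with itself. An additive $E=L^{h}$ is maximally additive if whenever $E'=L^{g}$ ($g\in\mathcal{H}(T)$) is additive with $E(\epsilon,x)\subset E'(\epsilon,x)$ for all $\epsilon\ge0$, $x\in X$, then $E=E'$. *)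

From HB Require Import structures.
From mathcomp Require Import all_boot all_order all_algebra.
From mathcomp Require Import all_classical all_reals all_analysis.
Set Implicit Arguments. Unset Strict Implicit. Unset Printing Implicit Defensive.
Import Order.TTheory GRing.Theory Num.Theory.
Import numFieldNormedType.Exports.
Local Open Scope classical_set_scope.
Local Open Scope ring_scope.

Section Dual.
Variables (R : realType) (X : normedModType R).

Record dual := Dual {
  dfun :> X -> R;
  dfunD : forall x y, dfun (x + y) = dfun x + dfun y;
  dfunZ : forall (a : R) x, dfun (a *: x) = a * dfun x;
  dfun_cont : continuous dfun }.

Definition pairing (x : X) (f : dual) : R := f x.

Definition ddist (f g : dual) : R :=
  sup [set `|f z - g z| | z in [set z : X | `|z| <= 1]].

Definition dnorm (f : dual) : R :=
  sup [set `|f z| | z in [set z : X | `|z| <= 1]].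

Definition bidual_elt (phi : dual -> R) : Prop :=
  (forall f g k : dual, (forall z, k z = f z + g z) -> phi k = phi f + phi g) /\
  (forall (a : R) (f k : dual), (forall z, k z = a * f z) -> phi k = a * phi f) /\
  (exists C : R, forall f, `|phi f| <= C * dnorm f).

Definition reflexive_space : Prop :=
  forall phi : dual -> R, bidual_elt phi -> exists x : X, forall f, phi f = f x.

Definition monotone_op (T : X -> set dual) : Prop :=
  forall x y f g, T x f -> T y g -> 0 <= pairing (x - y) f - pairing (x - y) g.

Definition maximal_monotone (T : X -> set dual) : Prop :=
  monotone_op T /\
  forall x f, (forall y g, T y g -> 0 <= pairing (x - y) f - pairing (x - y) g) ->
    T x f.

Local Open Scope ereal_scope.

(* lower semicontinuity w.r.t. the norm topology of X x X^*:
   every sublevel set is (sequentially) closed *)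
Definition lsc (h : X -> dual -> \bar R) : Prop :=
  forall (u : nat -> X) (v : nat -> dual) (x : X) (f : dual) (r : R),
    ((fun n => `|u n - x|%R) @ \oo --> (0%R : R))%classic ->
    ((fun n => ddist (v n) f) @ \oo --> (0%R : R))%classic ->
    (forall n, h (u n) (v n) <= r%:E) -> h x f <= r%:E.

(* convexity on X x X^* (k is the convex combination t f1 + (1-t) f2) *)
Definition convex_fun (h : X -> dual -> \bar R) : Prop :=
  forall (t : R) (x1 x2 : X) (f1 f2 k : dual), (0 < t < 1)%R ->
    (forall z, k z = t * f1 z + (1 - t) * f2 z)%R ->
    h (t *: x1 + (1 - t) *: x2)%R k <= t%:E * h x1 f1 + (1 - t)%:E * h x2 f2.

Definition HT (T : X -> set dual) (h : X -> dual -> \bar R) : Prop :=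
  lsc h /\ convex_fun h /\
  (forall x f, (pairing x f)%:E <= h x f) /\
  (forall x f, T x f -> h x f = (pairing x f)%:E).

Definition hstar_i (h : X -> dual -> \bar R) (x : X) (f : dual) : \bar R :=
  ereal_sup [set (pairing p.1 f + pairing x p.2)%:E - h p.1 p.2
            | p in [set: X * dual]].

Definition Lenl (g : X -> dual -> \bar R) (eps : R) (x : X) : set dual :=
  [set f | g x f <= (pairing x f + eps)%:E].

Local Close Scope ereal_scope.

Definition mutually_additive (E E' : R -> X -> set dual) : Prop :=
  forall (eps eta : R) (x y : X) (f g : dual), 0 <= eps -> 0 <= eta ->
    E eps x f -> E' eta y g ->
    - (eps + eta) <= pairing (x - y) f - pairing (x - y) g.

Definition additive_enl (E : R -> X -> set dual) : Prop := mutually_additive E E.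

Definition maximally_additive (T : X -> set dual) (h : X -> dual -> \bar R) : Prop :=
  additive_enl (Lenl h) /\
  forall g, HT T g -> additive_enl (Lenl g) ->
    (forall eps x, 0 <= eps -> Lenl h eps x `<=` Lenl g eps x) ->
    forall eps x, 0 <= eps -> Lenl h eps x = Lenl g eps x.

End Dual.

From HB Require Import structures.
From mathcomp Require Import all_boot all_order all_algebra.
From mathcomp Require Import all_classical all_reals all_analysis.
From mathcomp Require Import ring lra.
Set Implicit Arguments. Unset Strict Implicit. Unset Printing Implicit Defensive.
Import Order.TTheory GRing.Theory Num.Theory.
Import numFieldNormedType.Exports.
Local Open Scope classical_set_scope.
Local Open Scope ring_scope.

(* Taking the tolerances in the definition of mutual additivity to be exactly
   the gaps h - <.,.> and h' - <.,.> turns it into the Fenchel-Young type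
   inequality <y, f> + <x, g> - h (y, g) <= h' (x, f), i.e. into h^* o i <= h'.
   For (ii), if L^h is maximally additive and c := h^* o i (x0, f0) were below
   h (x0, f0), the conjugate of max (h^* o i, t), where
   t (y, g) = <y, f0> + <x0, g> - c, would be an additive member of H(T) lying
   below h with value at most c at (x0, f0), contradicting maximality.
   Maximal monotonicity of T is used only to see that h^* o i lies above the
   duality pairing. *)

Section DualSpace.
Variables (R : realType) (X : normedModType R).
Implicit Types (x y : X) (f g : dual X).

Lemma dual0 f : f 0 = 0.
Proof. by apply: (@addrI _ (f 0)); rewrite addr0 -dfunD addr0. Qed.

Lemma dualB f x y : f (x - y) = f x - f y.
Proof. by rewrite dfunD -scaleN1r dfunZ mulN1r. Qed.

Lemma dual_bounded f : exists2 C, 0 < C & forall x, `|f x| <= C * `|x|.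
Proof.
have /cvgrPdist_lt /(_ 1 ltr01) /nbhs_normP [d /= d0 Hd] := @dfun_cont _ _ f 0.
exists (2 / d) => [|x]; first by rewrite divr_gt0.
have [->|x0] := eqVneq x 0; first by rewrite dual0 !normr0 mulr0.
have nx : 0 < `|x| by rewrite normr_gt0.
set a := d / 2 / `|x|.
have a0 : 0 < a by rewrite /a !divr_gt0.
have : `|f (a *: x)| < 1.
  have := Hd (a *: x); rewrite /ball_ /= sub0r normrN dual0 sub0r normrN; apply.
  by rewrite normrZ gtr0_norm // /a divfK ?gt_eqF //; lra.
rewrite dfunZ normrM gtr0_norm // -ltr_pdivlMl // => /ltW /le_trans; apply.
by rewrite /a le_eqVlt; apply/orP; left; apply/eqP; field; rewrite ?gt_eqF.
Qed.

Lemma ler_ddist f g x : `|f x - g x| <= ddist f g * `|x|.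
Proof.
have [->|x0] := eqVneq x 0; first by rewrite !dual0 subrr !normr0 mulr0.
have nx : 0 < `|x| by rewrite normr_gt0.
have [Cf Cf0 HCf] := dual_bounded f; have [Cg Cg0 HCg] := dual_bounded g.
have hub : has_ubound [set `|f z - g z| | z in [set z : X | `|z| <= 1]].
  exists (Cf + Cg) => _ [z /= z1 <-].
  apply: (le_trans (ler_normB _ _)); apply: lerD.
  - by apply: (le_trans (HCf z)); rewrite -[leRHS]mulr1 ler_pM2l.
  - by apply: (le_trans (HCg z)); rewrite -[leRHS]mulr1 ler_pM2l.
have := ub_le_sup hub (ex_intro2 _ _ (`|x|^-1 *: x) _ erefl).
rewrite /= normrZ normfV normr_id mulVf ?gt_eqF // => /(_ (le_refl _)).
by rewrite !dfunZ -mulrBr normrM normfV normr_id -ler_pdivrMr // mulrC.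
Qed.

Lemma cvg_dual_coupling (u : nat -> X) (v : nat -> dual X) x f y g :
  ((fun n => `|u n - x|) @ \oo --> (0 : R))%classic ->
  ((fun n => ddist (v n) f) @ \oo --> (0 : R))%classic ->
  ((fun n => v n y + g (u n)) @ \oo --> f y + g x)%classic.
Proof.
move=> ux vf.
have vy : ((fun n => v n y) @ \oo --> f y)%classic.
  apply/subr_cvg0/norm_cvg0P.
  apply: (squeeze_cvgr (f := fun=> 0) (h := fun n => ddist (v n) f * `|y|)).
  - by apply: nearW => n; rewrite normr_ge0 ler_ddist.
  - exact: cvg_cst.
  - by rewrite -(mul0r `|y|); apply: cvgM vf (cvg_cst _).
have gu : ((fun n => g (u n)) @ \oo --> g x)%classic.
  by apply: (continuous_cvg _ (@dfun_cont _ _ g x)); apply/subr_cvg0/norm_cvg0P.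
exact: (cvgD vy gu).
Qed.

End DualSpace.

Section Conjugate.
Variables (R : realType) (X : normedModType R).
Implicit Types (phi psi : X -> dual X -> \bar R) (x y : X) (f g : dual X).
Local Open Scope ereal_scope.

Definition above_pairing phi := forall x f, (pairing x f)%:E <= phi x f.

Lemma above_pairingP phi x f : above_pairing phi ->
  phi x f = +oo \/ exists2 s, phi x f = s%:E & (pairing x f <= s)%R.
Proof. by move=> /(_ x f); case: (phi x f) => [s| |]; [right; exists s|left|]. Qed.

Lemma hstar_i_ub phi x f y g :
  (pairing y f + pairing x g)%:E - phi y g <= hstar_i phi x f.
Proof. by apply: ereal_sup_ubound; exists (y, g). Qed.

Lemma le_hstar_i phi psi : (forall x f, phi x f <= psi x f) ->
  forall x f, hstar_i psi x f <= hstar_i phi x f.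
Proof.
move=> le_phi_psi x f; apply: ge_ereal_sup => _ [[y g] _ <-].
exact: le_trans (leeB _ _) (hstar_i_ub phi x f y g).
Qed.

Lemma hstar_i_hstar_i_le phi : above_pairing phi ->
  forall x f, hstar_i (hstar_i phi) x f <= phi x f.
Proof.
move=> phi_ge x f.
case: (above_pairingP x f phi_ge) => [->|[s phis _]]; first exact: leey.
rewrite phis; apply: ge_ereal_sup => _ [[y g] _ <-] /=.
have := hstar_i_ub phi y g x f; rewrite phis.
case: (hstar_i phi y g) => [t| |] //=; last by rewrite addeNy leNye.
by rewrite -EFinB !lee_fin /pairing => ?; lra.
Qed.

Lemma hstar_i_lsc phi : above_pairing phi -> lsc (hstar_i phi).
Proof.
move=> phi_ge u v x f r ux vf le_r; apply: ge_ereal_sup => _ [[y g] _ <-] /=.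
case: (above_pairingP y g phi_ge) => [->|[s phis _]]; first by rewrite addeNy leNye.
rewrite phis -EFinB lee_fin /pairing.
apply: (cvgr_to_le (cvgB (cvg_dual_coupling (y := y) (g := g) ux vf) (cvg_cst s))).
apply: nearW => n; have := le_trans (hstar_i_ub phi (u n) (v n) y g) (le_r n).
by rewrite phis -EFinB lee_fin.
Qed.

Lemma hstar_i_convex phi : above_pairing phi -> convex_fun (hstar_i phi).
Proof.
move=> phi_ge t x1 x2 f1 f2 k /andP[t0 t1] kE.
apply: ge_ereal_sup => _ [[y g] _ <-] /=.
case: (above_pairingP y g phi_ge) => [->|[s phis _]]; first by rewrite addeNy leNye.
have t_ge0 : 0 <= t%:E by rewrite lee_fin ltW.
have t'_ge0 : 0 <= (1 - t)%:E by rewrite lee_fin subr_ge0 ltW.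
have le1 := lee_wpmul2l t_ge0 (hstar_i_ub phi x1 f1 y g).
have le2 := lee_wpmul2l t'_ge0 (hstar_i_ub phi x2 f2 y g).
apply: le_trans (leeD le1 le2); rewrite phis.
rewrite -!EFinB -!EFinM -EFinD lee_fin /pairing kE dfunD !dfunZ.
by rewrite le_eqVlt; apply/orP; left; apply/eqP; ring.
Qed.

Lemma hstar_i_above_pairing T phi : maximal_monotone T ->
  (forall x f, T x f -> phi x f = (pairing x f)%:E) -> above_pairing (hstar_i phi).
Proof.
move=> [_ T_max] phiT x f; rewrite leNgt; apply/negP => lt_xf.
have Txf : T x f.
  apply: T_max => y g Tyg; have := le_lt_trans (hstar_i_ub phi x f y g) lt_xf.
  by rewrite phiT // -EFinB lte_fin /pairing !dualB => ?; lra.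
by have := le_lt_trans (hstar_i_ub phi x f x f) lt_xf; rewrite phiT // -EFinB lte_fin; lra.
Qed.

Lemma Lenl_at phi x f s : phi x f = s%:E -> Lenl phi (s - pairing x f) x f.
Proof. by rewrite /Lenl /= => ->; rewrite addrC subrK. Qed.

Lemma le_Lenl phi psi eps x : (forall y g, psi y g <= phi y g) ->
  Lenl phi eps x `<=` Lenl psi eps x.
Proof. by move=> le_psi f; apply: le_trans. Qed.

Lemma Lenl_subset_le phi psi : above_pairing phi ->
  (forall eps x, (0 <= eps)%R -> Lenl phi eps x `<=` Lenl psi eps x) ->
  forall x f, psi x f <= phi x f.
Proof.
move=> phi_ge sub x f.
case: (above_pairingP x f phi_ge) => [->|[s phis le_s]]; first exact: leey.
have eps_ge0 : (0 <= s - pairing x f)%R by rewrite subr_ge0.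
by have := sub _ x eps_ge0 f (Lenl_at phis); rewrite /Lenl /= addrC subrK phis.
Qed.

Lemma mutually_additiveP phi psi : above_pairing phi -> above_pairing psi ->
  mutually_additive (Lenl phi) (Lenl psi) <-> forall x f, hstar_i phi x f <= psi x f.
Proof.
move=> phi_ge psi_ge; split=> [add x f|le_psi eps eta x y f g _ _ Lxf Lyg].
- case: (above_pairingP x f psi_ge) => [->|[r psir le_r]]; first exact: leey.
  rewrite psir; apply: ge_ereal_sup => _ [[y g] _ <-] /=.
  case: (above_pairingP y g phi_ge) => [->|[s phis le_s]].
    by rewrite addeNy leNye.
  have eps_ge0 : (0 <= s - pairing y g)%R by rewrite subr_ge0.
  have eta_ge0 : (0 <= r - pairing x f)%R by rewrite subr_ge0.
  have := add _ _ _ _ _ _ eps_ge0 eta_ge0 (Lenl_at phis) (Lenl_at psir).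
  by rewrite phis -EFinB lee_fin /pairing !dualB => ?; lra.
- have := le_trans (le_trans (hstar_i_ub phi y g x f) (le_psi y g)) Lyg.
  move: Lxf; rewrite /Lenl /=.
  case: (above_pairingP x f phi_ge) => [->|[s -> _]]; first by rewrite leye_eq.
  by rewrite -EFinB !lee_fin /pairing !dualB => ? ?; lra.
Qed.

End Conjugate.

Section MaximalAdditivity.
Variables (R : realType) (X : normedModType R) (T : X -> set (dual X)).
Implicit Types (h g : X -> dual X -> \bar R) (x y : X) (f : dual X).
Local Open Scope ereal_scope.

Lemma HT_above_pairing h : HT T h -> above_pairing h.
Proof. by case=> _ [_ []]. Qed.

Lemma maximally_additive_le h g : HT T g -> maximally_additive T h ->
  additive_enl (Lenl g) -> (forall x f, g x f <= h x f) ->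
  forall x f, h x f <= g x f.
Proof.
move=> HTg [_ h_max] add_g le_gh; apply: Lenl_subset_le (HT_above_pairing HTg) _.
move=> eps x eps_ge0.
by rewrite (h_max g HTg add_g (fun _ _ _ => le_Lenl le_gh) eps x eps_ge0).
Qed.

Section Competitor.
Variables (h : X -> dual X -> \bar R) (x0 : X) (f0 : dual X) (c : R).
Hypotheses (T_max : maximal_monotone T) (HTh : HT T h)
  (hstar_le_h : forall x f, hstar_i h x f <= h x f)
  (hstar_x0 : hstar_i h x0 f0 = c%:E).

Let tangent x f := (pairing x f0 + pairing x0 f - c)%R.
Let lower x f := maxe (hstar_i h x f) (tangent x f)%:E.

Let h_ge : above_pairing h := HT_above_pairing HTh.

Let hstar_le_lower x f : hstar_i h x f <= lower x f.
Proof. by rewrite le_max lexx. Qed.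

Let tangent_le_lower x f : (tangent x f)%:E <= lower x f.
Proof. by rewrite le_max lexx orbT. Qed.

Let lower_above_pairing : above_pairing lower.
Proof.
move=> x f; apply: le_trans (hstar_le_lower x f).
exact: hstar_i_above_pairing T_max HTh.2.2.2 x f.
Qed.

Let lower_le_h x f : lower x f <= h x f.
Proof.
rewrite ge_max hstar_le_h /=.
case: (above_pairingP x f h_ge) => [->|[s hs _]]; first exact: leey.
by have := hstar_i_ub h x0 f0 x f; rewrite hstar_x0 hs -EFinB !lee_fin /tangent; lra.
Qed.

Let lower_x0 : lower x0 f0 = c%:E.
Proof.
have := hstar_i_above_pairing T_max HTh.2.2.2 x0 f0; rewrite hstar_x0 lee_fin => le_c.
by rewrite /lower hstar_x0 /tangent; apply/max_idPl; rewrite lee_fin; lra.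
Qed.

Let competitor_le_h x f : hstar_i lower x f <= h x f.
Proof.
apply: le_trans (hstar_i_hstar_i_le h_ge x f).
exact: le_hstar_i hstar_le_lower x f.
Qed.

Let lower_le_competitor x f : lower x f <= hstar_i lower x f.
Proof.
rewrite ge_max (le_hstar_i lower_le_h) /=.
have := hstar_i_ub lower x f x0 f0; rewrite lower_x0 -EFinB; apply: le_trans.
by rewrite lee_fin /tangent; lra.
Qed.

Lemma additive_competitor : exists g, [/\ HT T g, additive_enl (Lenl g),
  forall x f, g x f <= h x f & g x0 f0 <= c%:E].
Proof.
have competitor_ge x f : (pairing x f)%:E <= hstar_i lower x f.
  exact: le_trans (lower_above_pairing x f) (lower_le_competitor x f).
exists (hstar_i lower); split => //.
- split; first exact: hstar_i_lsc.
  split; first exact: hstar_i_convex.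
  split=> // x f Txf; apply/le_anti; rewrite competitor_ge andbT.
  by rewrite -(HTh.2.2.2 x f Txf).
- apply/(mutually_additiveP competitor_ge competitor_ge) => x f.
  exact: le_trans (hstar_i_hstar_i_le lower_above_pairing x f) (lower_le_competitor x f).
- apply: ge_ereal_sup => _ [[y g] _ <-] /=.
  case: (above_pairingP y g lower_above_pairing) => [->|[s ls _]].
    by rewrite addeNy leNye.
  have := tangent_le_lower y g; rewrite ls.
  by rewrite -EFinB !lee_fin /tangent; lra.
Qed.

End Competitor.

Lemma maximally_additive_hstar_i_fixed h : maximal_monotone T -> HT T h ->
  maximally_additive T h -> forall x f, h x f = hstar_i h x f.
Proof.
move=> T_max HTh h_max x f; have h_ge := HT_above_pairing HTh.
have hstar_le_h := (mutually_additiveP h_ge h_ge).1 h_max.1.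
apply/le_anti; rewrite hstar_le_h andbT.
have hstar_ge := hstar_i_above_pairing T_max HTh.2.2.2.
case: (above_pairingP x f hstar_ge) => [->|[c hstar_x _]]; first exact: leey.
have [g [HTg add_g le_gh gx]] := additive_competitor T_max HTh hstar_le_h hstar_x.
by rewrite hstar_x; apply: le_trans (maximally_additive_le HTg h_max add_g le_gh x f) gx.
Qed.

Lemma hstar_i_fixed_maximally_additive h : HT T h ->
  (forall x f, h x f = hstar_i h x f) -> maximally_additive T h.
Proof.
move=> HTh h_fix; have h_ge := HT_above_pairing HTh.
split=> [|g HTg add_g sub eps x _].
  by apply/(mutually_additiveP h_ge h_ge) => x f; rewrite -h_fix.
have g_ge := HT_above_pairing HTg.
have le_gh := Lenl_subset_le h_ge sub.
have le_hg y f : h y f <= g y f.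
  rewrite h_fix; apply: le_trans (le_hstar_i le_gh y f) _.
  exact: (mutually_additiveP g_ge g_ge).1 add_g y f.
suff -> : g = h by [].
by apply/funext => y; apply/funext => f; apply/le_anti; rewrite le_gh le_hg.
Qed.

End MaximalAdditivity.

Theorem proposition3p2 (R : realType) (X : completeNormedModType R)
  (T : X -> set (dual X)) (h h' : X -> dual X -> \bar R) :
  reflexive_space X -> maximal_monotone T -> HT T h -> HT T h' ->
  [/\ (mutually_additive (Lenl h) (Lenl h') <->
         (forall x f, (hstar_i h x f <= h' x f)%E)),
      (additive_enl (Lenl h) <-> (forall x f, (hstar_i h x f <= h x f)%E)),
      ((forall x f, h x f = hstar_i h x f) <-> maximally_additive T h),
      mutually_additive (Lenl h) (Lenl (hstar_i h)) &
      (forall g, HT T g -> mutually_additive (Lenl h) (Lenl g) ->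
         forall eps x, 0 <= eps -> Lenl g eps x `<=` Lenl (hstar_i h) eps x)].
Proof.
move=> _ T_max HTh HTh'.
have h_ge := HT_above_pairing HTh.
have hstar_ge := hstar_i_above_pairing T_max HTh.2.2.2.
split.
- exact: mutually_additiveP (HT_above_pairing HTh').
- exact: mutually_additiveP.
- split; first exact: hstar_i_fixed_maximally_additive.
  exact: maximally_additive_hstar_i_fixed.
- exact/(mutually_additiveP h_ge hstar_ge).
- move=> g HTg add_hg eps x _; apply: le_Lenl.
  exact: (mutually_additiveP h_ge (HT_above_pairing HTg)).1 add_hg.
Qed.
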